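(* The standard unit sphere $S^n$ is $\Phi$-SSU if and only if $n>4$.
   Context: A Riemannian $n$-manifold $N$ is $\Phi$-SSU if there is an isometric immersion $N\to\mathbb R^q$ with second fundamental form $\mathsf B$ such that for every $y\in N$ and every unit $\mathsf x\in T_yN$, $\sum_{\beta=1}^n\big(4|\mathsf B(\mathsf x,\mathsf e_\beta)|^2-\langle \mathsf B(\mathsf x,\mathsf x),\mathsf B(\mathsf e_\beta,\mathsf e_\beta)\rangle\big)<0$, where $\{\mathsf e_\beta\}$ is an orthonormal basis of $T_yN$. *)

From HB Require Import structures.
From mathcomp Require Import all_boot all_order all_algebra.
From mathcomp Require Import all_classical all_reals all_analysis.
Set Implicit Arguments. Unset Strict Implicit. Unset Printing Implicit Defensive.
Import Order.TTheory GRing.Theory Num.Theory.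
Import numFieldNormedType.Exports.
Local Open Scope ring_scope.

Section Defs.
Variable R : realType.

(* Euclidean inner product on row vectors (NOT the library's max norm). *)
Definition dotr (m : nat) (u v : 'rV[R]_m) : R := (u *m v^T) 0 0.

Fixpoint iterD (m q : nat) (f : 'rV[R]_m -> 'rV[R]_q) (us : seq 'rV[R]_m)
  : 'rV[R]_m -> 'rV[R]_q :=
  match us with
  | [::] => f
  | u :: us' => fun x => 'D_u (iterD f us') x
  end.

Definition smooth_map (m q : nat) (f : 'rV[R]_m -> 'rV[R]_q) : Prop :=
  forall (us : seq 'rV[R]_m) (x : 'rV[R]_m), differentiable (iterD f us) x.

Definition on_sphere (n : nat) (y : 'rV[R]_n.+1) : Prop := dotr y y = 1.
Definition tangent (n : nat) (y u : 'rV[R]_n.+1) : Prop := dotr u y = 0.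

(* An isometric immersion S^n -> R^q, given by (the restriction to S^n of)
   a smooth map on R^(n+1); its differential preserves the round metric. *)
Definition isometric_immersion_sphere (n q : nat)
  (f : 'rV[R]_n.+1 -> 'rV[R]_q) : Prop :=
  smooth_map f /\
  forall y u v : 'rV[R]_n.+1, on_sphere y -> tangent y u -> tangent y v ->
    dotr ('D_u f y) ('D_v f y) = dotr u v.

(* Second fundamental form at y in S^n:  B(u,v) = D_u(df(V)) - df(nabla_u V)
   = D^2 f(y)(u,v) - <u,v> Df(y) y   (Gauss formula; nabla = Levi-Civita
   connection of the round sphere). *)
Definition sff (n q : nat) (f : 'rV[R]_n.+1 -> 'rV[R]_q)
  (y u v : 'rV[R]_n.+1) : 'rV[R]_q :=
  'D_u ('D_v f) y - dotr u v *: 'D_y f y.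

Definition PhiSSU_sphere (n : nat) : Prop :=
  exists (q : nat) (f : 'rV[R]_n.+1 -> 'rV[R]_q),
    isometric_immersion_sphere f /\
    forall (y x : 'rV[R]_n.+1) (e : 'I_n -> 'rV[R]_n.+1),
      on_sphere y -> tangent y x -> dotr x x = 1 ->
      (forall i, tangent y (e i)) ->
      (forall i j, dotr (e i) (e j) = (i == j)%:R) ->
      \sum_(b < n) (4 * dotr (sff f y x (e b)) (sff f y x (e b))
                    - dotr (sff f y x x) (sff f y (e b) (e b))) < 0.
End Defs.

From Pilot Require Import Defs.
From HB Require Import structures.
From mathcomp Require Import all_boot all_order all_algebra.
From mathcomp Require Import all_classical all_reals all_analysis.
From mathcomp Require Import ring lra.

Set Implicit Arguments. Unset Strict Implicit. Unset Printing Implicit Defensive.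
Import Order.TTheory GRing.Theory Num.Theory.
Import numFieldNormedType.Exports.
Local Open Scope ring_scope.

(* Summing Phi over the vectors of an
   orthonormal frame e_1, ..., e_n gives
     4 sum_(a,b) |B(e_a,e_b)|^2 - |sum_a B(e_a,e_a)|^2,
   which is nonnegative because |sum_a B(e_a,e_a)|^2 <= n sum_a |B(e_a,e_a)|^2
   (Cauchy-Schwarz) and n <= 4.  For n > 4 the standard inclusion
   S^n -> R^(n+1) works: its second fundamental form is B(u,v) = -<u,v> y, so
   Phi(x) = 4 sum_b <x,e_b>^2 - n <= 4 - n < 0 by Bessel's inequality. *)

Section SquareSums.
Variable R : realFieldType.

Lemma sqr_sum_le_card n (x : 'I_n -> R) :
  (\sum_a x a) ^+ 2 <= n%:R * \sum_a x a ^+ 2.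
Proof.
have sum_sqr_l : \sum_(a < n) \sum_(b < n) x a ^+ 2 = n%:R * \sum_a x a ^+ 2.
  by rewrite exchange_big /= sumr_const card_ord mulr_natl.
have sum_sqr_r : \sum_(a < n) \sum_(b < n) x b ^+ 2 = n%:R * \sum_a x a ^+ 2.
  by rewrite sumr_const card_ord mulr_natl.
have sum_cross : \sum_(a < n) \sum_(b < n) 2 * (x a * x b) = 2 * (\sum_a x a) ^+ 2.
  rewrite expr2 mulr_suml mulr_sumr; apply: eq_bigr => a _.
  by rewrite mulr_sumr mulr_sumr; apply: eq_bigr => b _; rewrite mulrA.
have sum_sqr_diff : \sum_a \sum_b (x a - x b) ^+ 2 =
                    2 * (n%:R * \sum_a x a ^+ 2 - (\sum_a x a) ^+ 2).
  have expand a b : (x a - x b) ^+ 2 = x a ^+ 2 + x b ^+ 2 - 2 * (x a * x b).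
    by ring.
  under eq_bigr do under eq_bigr do rewrite expand.
  under eq_bigr do rewrite sumrB big_split /=.
  rewrite sumrB big_split /= sum_sqr_l sum_sqr_r sum_cross.
  ring.
have : 0 <= \sum_a \sum_b (x a - x b) ^+ 2.
  by apply: sumr_ge0 => a _; apply: sumr_ge0 => b _; apply: sqr_ge0.
by rewrite sum_sqr_diff pmulr_rge0 // subr_ge0.
Qed.

Lemma sqr_sum_diag_le n (M : 'I_n -> 'I_n -> R) : (n <= 4)%N ->
  (\sum_a M a a) ^+ 2 <= 4 * \sum_a \sum_b M a b ^+ 2.
Proof.
move=> n_le4.
have diag_le : \sum_a M a a ^+ 2 <= \sum_a \sum_b M a b ^+ 2.
  apply: ler_sum => a _; rewrite (bigD1 a) //= lerDl.
  by apply: sumr_ge0 => b _; apply: sqr_ge0.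
have n_le4R : n%:R <= 4 :> R by rewrite (ler_nat R n 4).
have diag_ge0 : 0 <= \sum_a M a a ^+ 2 by apply: sumr_ge0 => a _; apply: sqr_ge0.
have := sqr_sum_le_card (fun a => M a a); nra.
Qed.

End SquareSums.

Section DotProduct.
Variable R : realType.

Lemma dotrE m (u v : 'rV[R]_m) : dotr u v = \sum_k u 0 k * v 0 k.
Proof. by rewrite /dotr !mxE; apply: eq_bigr => k _; rewrite mxE. Qed.

Lemma dotrC m (u v : 'rV[R]_m) : dotr u v = dotr v u.
Proof. by rewrite /dotr -[v in RHS]trmxK -trmx_mul [RHS]mxE. Qed.

Lemma dotrr_ge0 m (u : 'rV[R]_m) : 0 <= dotr u u.
Proof. by rewrite dotrE; apply: sumr_ge0 => k _; rewrite -expr2 sqr_ge0. Qed.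

Lemma dotrBl m (u w v : 'rV[R]_m) : dotr (u - w) v = dotr u v - dotr w v.
Proof. by rewrite /dotr mulmxBl !mxE. Qed.

Lemma dotrBr m (u w v : 'rV[R]_m) : dotr v (u - w) = dotr v u - dotr v w.
Proof. by rewrite !(dotrC v) dotrBl. Qed.

Lemma dotrZl m a (u v : 'rV[R]_m) : dotr (a *: u) v = a * dotr u v.
Proof. by rewrite /dotr -scalemxAl !mxE. Qed.

Lemma dotrZr m a (u v : 'rV[R]_m) : dotr v (a *: u) = a * dotr v u.
Proof. by rewrite !(dotrC v) dotrZl. Qed.

Lemma dotr_suml m p (w : 'I_p -> 'rV[R]_m) v :
  dotr (\sum_i w i) v = \sum_i dotr (w i) v.
Proof. by rewrite /dotr mulmx_suml summxE. Qed.

Lemma dotr_sumr m p (w : 'I_p -> 'rV[R]_m) v :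
  dotr v (\sum_i w i) = \sum_i dotr v (w i).
Proof. by rewrite dotrC dotr_suml; apply: eq_bigr => i _; rewrite dotrC. Qed.

Lemma dotr_sum_sqr_le m n (x : 'rV[R]_m) (e : 'I_n -> 'rV[R]_m) :
  (forall i j, dotr (e i) (e j) = (i == j)%:R) ->
  \sum_b dotr x (e b) ^+ 2 <= dotr x x.
Proof.
move=> e_orthonormal.
pose w := \sum_b dotr x (e b) *: e b.
have dotr_w_e j : dotr w (e j) = dotr x (e j).
  rewrite dotr_suml (bigD1 j) //= big1 => [|b /negbTE b_neq_j].
    by rewrite dotrZl e_orthonormal eqxx mulr1 addr0.
  by rewrite dotrZl e_orthonormal b_neq_j mulr0.
have dotr_w_w : dotr w w = \sum_b dotr x (e b) ^+ 2.
  by rewrite {2}/w dotr_sumr; apply: eq_bigr => b _; rewrite dotrZr dotr_w_e expr2.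
have dotr_x_w : dotr x w = \sum_b dotr x (e b) ^+ 2.
  by rewrite /w dotr_sumr; apply: eq_bigr => b _; rewrite dotrZr expr2.
have := dotrr_ge0 (x - w).
rewrite dotrBl !dotrBr (dotrC w x) dotr_w_w dotr_x_w; lra.
Qed.

Lemma dotr_delta m (i j : 'I_m) :
  dotr (delta_mx 0 i) (delta_mx 0 j) = (i == j)%:R :> R.
Proof.
rewrite /dotr trmx_delta mul_delta_mx_cond.
by case: (i == j); rewrite ?mulr1n ?mulr0n !mxE ?eqxx.
Qed.

End DotProduct.

Section Sphere.
Variable R : realType.

Definition Phi m n q (B : 'rV[R]_m -> 'rV[R]_m -> 'rV[R]_q)
    (e : 'I_n -> 'rV[R]_m) (x : 'rV[R]_m) : R :=
  \sum_b (4 * dotr (B x (e b)) (B x (e b)) - dotr (B x x) (B (e b) (e b))).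

Lemma sqr_norm_sum_diag_le n q (B : 'I_n -> 'I_n -> 'rV[R]_q) : (n <= 4)%N ->
  dotr (\sum_a B a a) (\sum_a B a a) <= 4 * \sum_a \sum_b dotr (B a b) (B a b).
Proof.
move=> n_le4; rewrite dotrE.
under eq_bigr do rewrite summxE -expr2.
under [X in _ <= 4 * X]eq_bigr do under eq_bigr do rewrite dotrE.
under [X in _ <= 4 * X]eq_bigr do rewrite exchange_big.
rewrite exchange_big /= mulr_sumr; apply: ler_sum => k _.
under [X in _ <= 4 * X]eq_bigr do under eq_bigr do rewrite -expr2.
exact: (sqr_sum_diag_le (fun a b => B a b 0 k)).
Qed.

Lemma sum_Phi_frame_ge0 m n q (B : 'rV[R]_m -> 'rV[R]_m -> 'rV[R]_q)
    (e : 'I_n -> 'rV[R]_m) :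
  (n <= 4)%N -> 0 <= \sum_a Phi B e (e a).
Proof.
move=> n_le4; rewrite /Phi.
under eq_bigr do rewrite sumrB -mulr_sumr -dotr_sumr.
rewrite sumrB -mulr_sumr -dotr_suml subr_ge0.
exact: (sqr_norm_sum_diag_le (fun a b => B (e a) (e b))).
Qed.

Definition north_pole n : 'rV[R]_n.+1 := delta_mx 0 ord0.
Definition pole_frame n (i : 'I_n) : 'rV[R]_n.+1 := delta_mx 0 (lift ord0 i).

Lemma north_pole_on_sphere n : on_sphere (north_pole n).
Proof. by rewrite /on_sphere dotr_delta eqxx. Qed.

Lemma pole_frame_tangent n (i : 'I_n) : tangent (north_pole n) (pole_frame i).
Proof. by rewrite /tangent dotr_delta eq_sym (negbTE (neq_lift _ _)). Qed.

Lemma pole_frame_orthonormal n (i j : 'I_n) :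
  dotr (pole_frame i) (pole_frame j) = (i == j)%:R.
Proof. by rewrite dotr_delta (inj_eq (@lift_inj _ ord0)). Qed.

Lemma not_PhiSSU_sphere n : (0 < n)%N -> (n <= 4)%N -> ~ PhiSSU_sphere R n.
Proof.
move=> n_gt0 n_le4 [q [f [_ PhiSSU_f]]].
pose B := sff f (north_pole n); pose e := @pole_frame n.
have Phi_lt0 a : Phi B e (e a) < 0.
  apply: PhiSSU_f; rewrite ?pole_frame_orthonormal ?eqxx //.
  - exact: north_pole_on_sphere.
  - exact: pole_frame_tangent.
  - exact: pole_frame_tangent.
  - exact: pole_frame_orthonormal.
have : \sum_a Phi B e (e a) < \sum_(a < n) 0.
  apply: ltr_sum => [|a _]; last exact: Phi_lt0.
  by apply/hasP; exists (Ordinal n_gt0); rewrite ?mem_index_enum.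
by rewrite big1_eq ltNge sum_Phi_frame_ge0.
Qed.

Lemma iterD_id m (us : seq 'rV[R]_m) :
  Defs.iterD id us = id \/ exists c, Defs.iterD id us = cst c.
Proof.
elim: us => [|u us [IH|[c IH]]] /=; first by left.
- by right; exists u; apply: funext => z; rewrite IH derive_id.
- by right; exists 0; apply: funext => z; rewrite IH derive_cst.
Qed.

Lemma smooth_map_id m : smooth_map (id : 'rV[R]_m -> 'rV[R]_m).
Proof. by move=> us x; case: (iterD_id us) => [->|[c ->]]. Qed.

Lemma isometric_immersion_id n : isometric_immersion_sphere (id : 'rV[R]_n.+1 -> _).
Proof. by split=> [|y u v _ _ _]; [exact: smooth_map_id | rewrite !derive_id]. Qed.

Lemma sff_id n (y u v : 'rV[R]_n.+1) : sff id y u v = (- dotr u v) *: y.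
Proof.
have D_id w : 'D_w (id : 'rV[R]_n.+1 -> _) = cst w.
  by apply: funext => z; rewrite derive_id.
by rewrite /sff D_id derive_cst derive_id sub0r scaleNr.
Qed.

Lemma Phi_sff_id n (y x : 'rV[R]_n.+1) (e : 'I_n -> 'rV[R]_n.+1) :
  on_sphere y -> dotr x x = 1 ->
  (forall i j, dotr (e i) (e j) = (i == j)%:R) ->
  Phi (sff id y) e x = 4 * \sum_b dotr x (e b) ^+ 2 - n%:R.
Proof.
move=> y_on_sphere x_unit e_orthonormal; rewrite /Phi.
under eq_bigr do rewrite !sff_id !dotrZl !dotrZr y_on_sphere x_unit e_orthonormal eqxx.
rewrite sumrB sumr_const card_ord mulr_sumr; congr (_ - _).
  by apply: eq_bigr => b _; rewrite mulr1 mulrNN expr2.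
by rewrite mulr1 mulrNN mulr1.
Qed.

Lemma PhiSSU_sphere_inclusion n : (4 < n)%N -> PhiSSU_sphere R n.
Proof.
move=> n_gt4; exists n.+1, id; split; first exact: isometric_immersion_id.
move=> y x e y_on_sphere _ x_unit _ e_orthonormal.
rewrite -/(Phi (sff id y) e x) Phi_sff_id //.
have := dotr_sum_sqr_le x e_orthonormal; rewrite x_unit.
have : 5 <= n%:R :> R by rewrite (ler_nat R 5 n).
lra.
Qed.

End Sphere.

Theorem corollary5p2 (R : realType) (n : nat) :
  (0 < n)%N -> (PhiSSU_sphere R n <-> (4 < n)%N).
Proof.
move=> n_gt0; split=> [PhiSSU_n|]; last exact: PhiSSU_sphere_inclusion.
by rewrite ltnNge; apply/negP => n_le4; exact: not_PhiSSU_sphere n_gt0 n_le4 PhiSSU_n.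
Qed.
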